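(* Assume (A7). Then for the iterates of D-MSSCA, for all $T>1$ and $\alpha\in(0,1)$, $$\sum_{t=1}^T\mathbb{E}[(\theta^t)^2]\le\frac{4\alpha^2\lambda_W^2}{(1-\lambda_W^2)^2}\sum_{t=1}^{T-1}\mathbb{E}\|\delta^t\|^2 .$$
   Context: Problem. Let $n,d\ge 1$. For $i\in\{1,\dots,n\}$ and each value of a random variable $\xi$, $f_i(\cdot,\xi):\mathbb{R}^d\to\mathbb{R}$ is differentiable (possibly non-convex); $u_i(x):=\mathbb{E}[f_i(x,\xi_i)]$ and $u(x):=\frac1n\sum_{i=1}^n u_i(x)$. The function $h:\mathbb{R}^d\to\mathbb{R}$ is convex (possibly non-smooth), $g:\mathbb{R}^d\to\mathbb{R}$ is convex, $\mathcal{X}:=\{x\in\mathbb{R}^d: g(x)\le 0\}$, and $\mathbb{1}_{\mathcal X}$ is its indicator function ($0$ on $\mathcal X$, $+\infty$ outside). Let $U:=u+h$ and $U^\star:=\min_{x\in\mathcal X}U(x)$. The $n$ agents communicate over a graph with vertex set $\{1,\dots,n\}$ and edge set $\mathcal E$ through a matrix $W\in\mathbb{R}^{n\times n}$; $\lambda_W:=\lambda_{\max}(W-\frac1n\mathbf 1_n\mathbf 1_n^\top)$. Algorithm D-MSSCA. Parameters: $\alpha,\beta\in(0,1)$, $\mu>0$, an initial batch size $b_0\in\mathbb N$. For each $i$, each $x'\in\mathbb{R}^d$ and each sample $\xi$, a surrogate $\hat f_i(\cdot,x',\xi):\mathbb{R}^d\to\mathbb{R}$ is used that is $\mu$-strongly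 convex and satisfies $\nabla_x\hat f_i(x',x',\xi)=\nabla f_i(x',\xi)$. Node $i$ draws samples $\xi_i^{1,1},\dots,\xi_i^{1,b_0}$ (with $\xi_i^1:=\xi_i^{1,1}$) and then $\xi_i^{t}$ for $t\ge2$. Initialization: $x_i^1=\bar x^1$ for all $i$, for a common point $\bar x^1\in\mathcal X$; $z_i^1=y_i^1=\frac1{b_0}\sum_{r=1}^{b_0}\nabla f_i(x_i^1,\xi_i^{1,r})$; $z_i^0:=0$ and $\nabla f_i(x_i^0,\xi_i^1):=0$. For $t\ge1$, each node $i$ computes $\tilde f_i(x):=\hat f_i(x,x_i^t,\xi_i^t)+(1-\beta)\langle z_i^{t-1}-\nabla f_i(x_i^{t-1},\xi_i^t),x-x_i^t\rangle$, $\hat x_i^t:=\arg\min_{x\in\mathcal X}\ \tilde f_i(x)+\langle y_i^t-z_i^t,x-x_i^t\rangle+h(x)$, $x_i^{t+1}:=\sum_{j=1}^nW_{ij}\big(x_j^t+\alpha(\hat x_j^t-x_j^t)\big)$, $z_i^{t+1}:=\nabla f_i(x_i^{t+1},\xi_i^{t+1})+(1-\beta)\big(z_i^t-\nabla f_i(x_i^t,\xi_i^{t+1})\big)$, $y_i^{t+1}:=\sum_{j=1}^nW_{ij}\big(y_j^t+z_j^{t+1}-z_j^t\big)$. Notation. $x^t,y^t,z^t,\hat x^t\in\mathbb{R}^{nd}$ are the stacked vectors $[x_1^t;\dots;x_n^t]$ etc.; $\bar x^t=\frac1n\sum_ix_i^t$, and similarly $\bar y^t,\bar z^t$. $\nabla\mathbf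 u(x^t):=[\nabla u_1(x_1^t);\dots;\nabla u_n(x_n^t)]$ and $\overline{\nabla u}(x^t):=\frac1n\sum_i\nabla u_i(x_i^t)$. Define $\theta^t:=\|x^t-(\mathbf 1_n\otimes I_d)\bar x^t\|$, $\delta^t:=\hat x^t-x^t$, $\phi^t:=\mathbb{E}\|\bar z^t-\overline{\nabla u}(x^t)\|^2$, $\upsilon^t:=\mathbb{E}\|z^t-\nabla\mathbf u(x^t)\|^2$, $\varepsilon^t:=\mathbb{E}\|y^t-(\mathbf 1_n\otimes I_d)\bar y^t\|^2$. Norms are Euclidean. Assumptions. (A1) $\inf_{x}U(x)>-\infty$. (A2) With $\mathcal H^t$ the history generated by $\{\xi_i^\tau\}_{i\le n,\tau\le t-1}$, $\mathbb{E}[\nabla f_i(x^t,\xi_i^t)\mid\mathcal H^t]=\nabla u_i(x^t)$. (A3) $\mathbb{E}\|\nabla f_i(x,\xi_i^t)-\nabla u_i(x)\|^2\le\sigma_i^2$ for all $x$; $\bar\sigma^2:=\sum_i\sigma_i^2$. (A4) $\mathbb{E}\|\nabla f_i(x,\xi)-\nabla f_i(y,\xi)\|^2\le L^2\|x-y\|^2$ for all $x,y$. (A7) The graph is undirected and connected, $W$ is doubly stochastic, $W_{ii}>0$ for all $i$, and for $i\ne j$, $W_{ij}>0$ if $(i,j)\in\mathcal E$ and $W_{ij}=0$ otherwise. *)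

From HB Require Import structures.
From mathcomp Require Import all_boot all_order all_algebra.
From mathcomp Require Import all_classical all_reals all_analysis.
Set Implicit Arguments. Unset Strict Implicit. Unset Printing Implicit Defensive.
Import Order.TTheory GRing.Theory Num.Theory.
Import numFieldNormedType.Exports.
Local Open Scope classical_set_scope.
Local Open Scope ring_scope.

Section Defs.
Variable R : realType.

Definition dotv (d : nat) (u v : 'rV[R]_d) : R := \sum_(k < d) u 0 k * v 0 k.
Definition enorm (d : nat) (u : 'rV[R]_d) : R := Num.sqrt (dotv u u).

Definition cnorm (n : nat) (v : 'cV[R]_n) : R := Num.sqrt (\sum_(i < n) v i 0 ^+ 2).

(* Euclidean norm of a stacked vector [v_1; ...; v_n] in R^{nd} *)
Definition snorm (n d : nat) (v : 'I_n -> 'rV[R]_d) : R :=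
  Num.sqrt (\sum_(i < n) enorm (v i) ^+ 2).

Definition avg (n d : nat) (v : 'I_n -> 'rV[R]_d) : 'rV[R]_d :=
  n%:R^-1 *: \sum_(i < n) v i.

(* consensus error  theta = || v - 1_n (x) vbar || *)
Definition cons_err (n d : nat) (v : 'I_n -> 'rV[R]_d) : R :=
  snorm (fun i => v i - avg v).

Definition spec_norm (n : nat) (M : 'M[R]_n) : R :=
  sup [set cnorm (M *m v) | v in [set v : 'cV[R]_n | cnorm v <= 1]].

(* lambda_W := || W - (1/n) 1 1^T ||_2 *)
Definition lambdaW (n : nat) (W : 'M[R]_n) : R :=
  spec_norm (W - \matrix_(i, j) n%:R^-1).

Definition convex_fun (d : nat) (f : 'rV[R]_d -> R) : Prop :=
  forall x y (l : R), 0 <= l <= 1 ->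
    f (l *: x + (1 - l) *: y) <= l * f x + (1 - l) * f y.

Definition strongly_convex (d : nat) (mu : R) (f : 'rV[R]_d -> R) : Prop :=
  forall x y (l : R), 0 <= l <= 1 ->
    f (l *: x + (1 - l) *: y)
      <= l * f x + (1 - l) * f y - mu / 2 * l * (1 - l) * enorm (x - y) ^+ 2.

Definition has_gradient (d : nat) (f : 'rV[R]_d -> R) (x gr : 'rV[R]_d) : Prop :=
  differentiable f x /\ forall v : 'rV[R]_d, 'D_v f x = dotv gr v.

Definition assumption_A7 (n : nat) (E : rel 'I_n) (W : 'M[R]_n) : Prop :=
  (forall i j, E i j = E j i) /\
  (forall i j, connect E i j) /\
  (forall i j, 0 <= W i j) /\
  (forall i, \sum_(j < n) W i j = 1) /\
  (forall j, \sum_(i < n) W i j = 1) /\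
  (forall i, 0 < W i i) /\
  (forall i j, i != j -> (E i j -> 0 < W i j) /\ (~~ E i j -> W i j = 0)).


(* The iterates (x, xhat, y, z), indexed by t >= 1 and by the outcome w, of
   D-MSSCA run with samples xi i t w (t >= 1; xi i 1 = first sample of the
   initial batch) and initial batch batch i r w (r < b0). *)
Definition DMSSCA_iterates (n d : nat) (Omega : Type) (Xi : Type)
  (W : 'M[R]_n) (alpha beta : R) (b0 : nat)
  (gradf : 'I_n -> 'rV[R]_d -> Xi -> 'rV[R]_d)
  (fhat : 'I_n -> 'rV[R]_d -> 'rV[R]_d -> Xi -> R)
  (h g : 'rV[R]_d -> R)
  (xi batch : 'I_n -> nat -> Omega -> Xi) (x1 : 'rV[R]_d)
  (x xhat y z : nat -> Omega -> 'I_n -> 'rV[R]_d) : Prop :=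
  (forall w i, x 1%N w i = x1) /\
  (forall w i, z 1%N w i = b0%:R^-1 *: \sum_(r < b0) gradf i x1 (batch i r w)) /\
  (forall w i, y 1%N w i = z 1%N w i) /\
  (* local strongly convex subproblem (z^0 := 0, grad f_i(x^0, xi^1) := 0) *)
  (forall t w i, (1 <= t)%N ->
     let corr := if t == 1%N then 0
                 else z t.-1 w i - gradf i (x t.-1 w i) (xi i t w) in
     let F := fun v : 'rV[R]_d =>
         fhat i v (x t w i) (xi i t w)
         + (1 - beta) * dotv corr (v - x t w i)
         + dotv (y t w i - z t w i) (v - x t w i) + h v in
     g (xhat t w i) <= 0 /\
     (forall v, g v <= 0 -> F (xhat t w i) <= F v)) /\
  (forall t w i, (1 <= t)%N ->
     x t.+1 w i = \sum_(j < n) W i j *: (x t w j + alpha *: (xhat t w j - x t w j))) /\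
  (forall t w i, (1 <= t)%N ->
     z t.+1 w i = gradf i (x t.+1 w i) (xi i t.+1 w)
                  + (1 - beta) *: (z t w i - gradf i (x t w i) (xi i t.+1 w))) /\
  (forall t w i, (1 <= t)%N ->
     y t.+1 w i = \sum_(j < n) W i j *: (y t w j + z t.+1 w j - z t w j)).

End Defs.

From mathcomp Require Import all_boot all_order all_algebra.
From mathcomp Require Import all_classical all_reals all_analysis.
From mathcomp Require Import ring lra.
From mathcomp Require Import measurable_realfun lebesgue_integral.
Import Order.TTheory GRing.Theory Num.Theory.
Local Open Scope classical_set_scope.
Local Open Scope ring_scope.

(* Let J := W - 11^T/n, so that lambda_W = ||J||.  Because W is doubly
   stochastic, mixing preserves averages and the deviation of W v from its mean
   is J applied to the deviation of v; hence, coordinatewise and with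
   L := lambda_W^2, Young's inequality gives
     (theta^{t+1})^2 <= (1 + L)/2 (theta^t)^2 + L (1 + L)/(1 - L) alpha^2 ||delta^t||^2.
   Summing this contraction from theta^1 = 0 bounds the sum of the (theta^t)^2
   on every sample path, and integrating gives the claim.
   The only delicate point is L < 1.  The variance identity for convex
   combinations shows that a mixing step dissipates at least half of the energy
   sum_j sum_k W_jj W_jk (u_j - u_k)^2, and connectivity plus positive diagonal
   and edge weights gives a Poincare inequality bounding sum_i u_i^2 by a
   multiple of that energy for every zero-sum u (chain the edge differences
   along a shortest path). *)

Lemma ler_sum_term {R : numDomainType} {I : finType} (F : I -> R) (a : I) :
  (forall i, 0 <= F i) -> F a <= \sum_i F i.
Proof. by move=> F_ge0; rewrite (bigD1 a) //= lerDl sumr_ge0. Qed.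

Lemma sqr_wsumE {R : numFieldType} {I : finType} (w u : I -> R) : \sum_j w j = 1 ->
  (\sum_j w j * u j) ^+ 2 =
  \sum_j w j * u j ^+ 2 - 2^-1 * \sum_j \sum_k w j * w k * (u j - u k) ^+ 2.
Proof.
move=> w1; set m := \sum_j w j * u j.
have inner j : \sum_k w j * w k * (u j - u k) ^+ 2 =
    w j * u j ^+ 2 - 2 * (w j * u j) * m + w j * \sum_k w k * u k ^+ 2.
  have -> : w j * u j ^+ 2 = w j * u j ^+ 2 * \sum_k w k by rewrite w1 mulr1.
  rewrite !mulr_sumr -sumrB -big_split /=.
  by apply: eq_bigr => k _; ring.
rewrite (eq_bigr _ (fun j _ => inner j)) big_split sumrB /= -!mulr_suml w1 -mulr_sumr.
by rewrite -/m mul1r; field.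
Qed.

Lemma mulr_sqrD_le {R : realFieldType} (L a c : R) : 0 <= L < 1 ->
  L * (a + c) ^+ 2 <= (1 + L) / 2 * a ^+ 2 + L * (1 + L) / (1 - L) * c ^+ 2.
Proof.
case/andP=> L_ge0 L_lt1; rewrite -subr_ge0.
have -> : (1 + L) / 2 * a ^+ 2 + L * (1 + L) / (1 - L) * c ^+ 2 - L * (a + c) ^+ 2
    = ((1 - L) * a - 2 * L * c) ^+ 2 / (2 * (1 - L)).
  by field; rewrite subr_eq0 gt_eqF.
by rewrite divr_ge0 ?sqr_ge0 // mulr_ge0 // subr_ge0 ltW.
Qed.

Section Mean.
Context {R : realFieldType} {n : nat}.
Implicit Types (v e : 'I_n -> R).

Definition mean v := n%:R^-1 * \sum_j v j.

Definition dev v := \sum_i (v i - mean v) ^+ 2.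

Hypothesis n_gt0 : (0 < n)%N.

Lemma sum_center v : \sum_j (v j - mean v) = 0.
Proof.
rewrite sumrB sumr_const card_ord /mean -[_ * _ *+ n]mulr_natl mulrA mulfV ?mul1r ?subrr //.
by rewrite pnatr_eq0 -lt0n.
Qed.

Lemma wsum_subr (w : 'I_n -> R) v c : \sum_j w j = 1 ->
  \sum_j w j * (v j - c) = \sum_j w j * v j - c.
Proof.
move=> w1; rewrite -[c in RHS]mul1r -w1 mulr_suml -sumrB.
by apply: eq_bigr => j _; rewrite mulrBr.
Qed.

Lemma wsum_centerE (w : 'I_n -> R) v : \sum_j w j = 1 ->
  \sum_j (w j - n%:R^-1) * v j = \sum_j w j * (v j - mean v).
Proof.
move=> w1; rewrite wsum_subr // /mean mulr_sumr -sumrB.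
by apply: eq_bigr => j _; rewrite mulrBl.
Qed.

Lemma dev_const (c : R) : dev (fun _ => c) = 0.
Proof.
have mean_c : mean (fun _ => c) = c.
  by rewrite /mean sumr_const card_ord -[c *+ n]mulr_natl mulKf // pnatr_eq0 -lt0n.
by rewrite /dev mean_c big1 // => i _; rewrite subrr expr0n.
Qed.

Lemma dev_le_sum_sqr v : dev v <= \sum_j v j ^+ 2.
Proof.
rewrite /dev -subr_ge0 -sumrB.
have -> : \sum_j (v j ^+ 2 - (v j - mean v) ^+ 2) = \sum_j (2 * mean v * v j - mean v ^+ 2).
  by apply: eq_bigr => j _; ring.
have sum_v : \sum_j v j = n%:R * mean v by rewrite /mean mulrA mulfV ?mul1r // pnatr_eq0 -lt0n.
rewrite sumrB -mulr_sumr sumr_const card_ord sum_v -mulr_natl.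
have : 0 <= n%:R * mean v ^+ 2 :> R by rewrite mulr_ge0 ?sqr_ge0.
lra.
Qed.

Lemma mean_add v e : mean (fun i => v i + e i) = mean v + mean e.
Proof. by rewrite /mean big_split mulrDr. Qed.

Lemma dev_add_le (L : R) v e : 0 <= L < 1 ->
  L * dev (fun i => v i + e i) <=
  (1 + L) / 2 * dev v + L * (1 + L) / (1 - L) * \sum_i e i ^+ 2.
Proof.
move=> /[dup] /andP[L_ge0 L_lt1] L01.
have c_ge0 : 0 <= L * (1 + L) / (1 - L) by apply: divr_ge0; [apply: mulr_ge0|]; lra.
apply: le_trans (_ : _ <= (1 + L) / 2 * dev v + L * (1 + L) / (1 - L) * dev e) _.
  rewrite /dev mean_add mulr_sumr !mulr_sumr -big_split ler_sum // => i _.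
  by rewrite (_ : _ - _ = (v i - mean v) + (e i - mean e)) ?mulr_sqrD_le //; ring.
by rewrite lerD2l ler_wpM2l ?dev_le_sum_sqr.
Qed.

End Mean.

Lemma path_dist_le {R : numDomainType} {T : Type} {e : rel T} {u : T -> R} {s : R} :
  (forall a b, e a b -> `|u a - u b| <= s) ->
  forall a p, path e a p -> `|u a - u (last a p)| <= (size p)%:R * s.
Proof.
move=> s_edge a p; elim: p a => [|b p IHp] a /=; first by rewrite subrr normr0 mul0r.
case/andP=> /s_edge ab_le /IHp bp_le.
have -> : u a - u (last b p) = (u a - u b) + (u b - u (last b p)) by rewrite addrA subrK.
rewrite -addn1 natrD mulrDl mul1r addrC.
by rewrite (le_trans (ler_normD _ _)) // lerD.
Qed.

Lemma connect_short_path {T : finType} (e : rel T) (x y : T) : connect e x y ->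
  exists2 p, path e x p & y = last x p /\ (size p < #|T|)%N.
Proof.
case/connectP=> p + ->; case/shortenP=> p' e_p' uniq_p' _.
exists p' => //; split=> //; rewrite -ltnS.
by move/card_uniqP: uniq_p' => /= <-; rewrite ltnS max_card.
Qed.

Section DoublyStochastic.
Context {R : realFieldType} {n : nat} (W : 'M[R]_n).
Hypothesis W_ge0 : forall i j, 0 <= W i j.
Hypothesis W_row : forall i, \sum_j W i j = 1.
Hypothesis W_col : forall j, \sum_i W i j = 1.

Definition diag_energy (u : 'I_n -> R) :=
  \sum_j \sum_k W j j * W j k * (u j - u k) ^+ 2.

Lemma diag_energy_term_ge0 (u : 'I_n -> R) j k : 0 <= W j j * W j k * (u j - u k) ^+ 2.
Proof. by rewrite mulr_ge0 ?sqr_ge0 // mulr_ge0. Qed.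

Lemma diag_energy_ge0 (u : 'I_n -> R) : 0 <= diag_energy u.
Proof.
by apply: sumr_ge0 => j _; apply: sumr_ge0 => k _; apply: diag_energy_term_ge0.
Qed.

Lemma diag_energy_ge_term (u : 'I_n -> R) a b :
  W a a * W a b * (u a - u b) ^+ 2 <= diag_energy u.
Proof.
apply: le_trans (ler_sum_term (fun k => W a a * W a k * (u a - u k) ^+ 2) b _) _.
  exact: diag_energy_term_ge0.
apply: (ler_sum_term (fun j => \sum_k W j j * W j k * (u j - u k) ^+ 2)) => j.
by apply: sumr_ge0 => k _; apply: diag_energy_term_ge0.
Qed.

Lemma sum_sqr_mix_le (u : 'I_n -> R) :
  \sum_i (\sum_j W i j * u j) ^+ 2 + 2^-1 * diag_energy u <= \sum_i u i ^+ 2.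
Proof.
rewrite (eq_bigr _ (fun i _ => sqr_wsumE (W i) u (W_row i))) sumrB exchange_big /=.
rewrite (eq_bigr (fun j => u j ^+ 2)); last by move=> j _; rewrite -mulr_suml W_col mul1r.
rewrite -addrA gerDl addrC subr_le0 -mulr_sumr ler_wpM2l // /diag_energy.
apply: ler_sum => i _; apply: ler_sum_term => j.
by apply: sumr_ge0 => k _; rewrite mulr_ge0 ?sqr_ge0 // mulr_ge0.
Qed.

End DoublyStochastic.

Section SpectralNorm.
Context {R : realType} {n : nat}.
Implicit Types (x : 'cV[R]_n) (M : 'M[R]_n).

Lemma cnorm_ge0 x : 0 <= cnorm x.
Proof. exact: sqrtr_ge0. Qed.

Lemma cnorm_sqr x : cnorm x ^+ 2 = \sum_i x i 0 ^+ 2.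
Proof. by rewrite sqr_sqrtr // sumr_ge0 // => i _; rewrite sqr_ge0. Qed.

Lemma cnormZ (a : R) x : cnorm (a *: x) = `|a| * cnorm x.
Proof.
rewrite /cnorm -sqrtr_sqr -sqrtrM ?sqr_ge0 // mulr_sumr.
by congr Num.sqrt; apply: eq_bigr => i _; rewrite mxE exprMn.
Qed.

Section Bounded.
Context {M : 'M[R]_n} {c : R}.
Hypothesis c_ge0 : 0 <= c.
Hypothesis M_bounded : forall x, cnorm (M *m x) <= c * cnorm x.

Let S := [set cnorm (M *m v) | v in [set v : 'cV[R]_n | cnorm v <= 1]].

Let S0 : S 0.
Proof.
by exists 0; rewrite /= /cnorm ?mulmx0 big1 ?sqrtr0 // => i _; rewrite mxE expr0n.
Qed.

Let S_ub : ubound S c.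
Proof.
move=> _ [v /= v_le1 <-]; apply: le_trans (M_bounded v) _.
by rewrite -[leRHS]mulr1 ler_wpM2l.
Qed.

Let S_sup : has_sup S.
Proof. by split; [exists 0 | exists c]. Qed.

Lemma spec_norm_le : 0 <= spec_norm M <= c.
Proof. by rewrite (sup_upper_bound S_sup S0) ge_sup //; exists 0. Qed.

Lemma cnorm_mulmx_le x : cnorm (M *m x) <= spec_norm M * cnorm x.
Proof.
have [x0|x_neq0] := eqVneq (cnorm x) 0.
  by rewrite x0 mulr0; have := M_bounded x; rewrite x0 mulr0.
have x_gt0 : 0 < cnorm x by rewrite lt_def x_neq0 cnorm_ge0.
have Sx : S (cnorm (M *m ((cnorm x)^-1 *: x))).
  by exists ((cnorm x)^-1 *: x); rewrite //= cnormZ ger0_norm ?invr_ge0 ?cnorm_ge0 ?mulVf.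
move: (sup_upper_bound S_sup Sx); rewrite -scalemxAr cnormZ ger0_norm ?invr_ge0 ?cnorm_ge0 //.
by rewrite mulrC ler_pdivrMr.
Qed.

End Bounded.
End SpectralNorm.

Section StackedVectors.
Context {R : realType} {n d : nat}.
Implicit Types v : 'I_n -> 'rV[R]_d.

Lemma snorm_sqrE v : snorm v ^+ 2 = \sum_k \sum_i v i 0 k ^+ 2.
Proof.
have enorm_sqr (u : 'rV[R]_d) : enorm u ^+ 2 = \sum_k u 0 k ^+ 2.
  by rewrite sqr_sqrtr ?sumr_ge0 // => k _; rewrite -expr2 sqr_ge0.
rewrite sqr_sqrtr ?sumr_ge0 // => [|i _]; last by rewrite sqr_ge0.
by rewrite exchange_big; apply: eq_bigr => i _; rewrite enorm_sqr.
Qed.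

Lemma cons_err_sqrE v : cons_err v ^+ 2 = \sum_k dev (fun i => v i 0 k).
Proof.
rewrite /cons_err snorm_sqrE; apply: eq_bigr => k _; apply: eq_bigr => i _.
by rewrite !mxE summxE.
Qed.

Lemma cons_err_const (a : 'rV[R]_d) : (0 < n)%N -> cons_err (fun _ : 'I_n => a) ^+ 2 = 0.
Proof. by move=> n_gt0; rewrite cons_err_sqrE big1 // => k _; apply: dev_const. Qed.

End StackedVectors.

Lemma sum_le_of_contraction {R : realFieldType} (q : R) (a b : nat -> R) (T : nat) :
  0 <= q -> (forall t, 0 <= a t) -> a 1%N = 0 ->
  (forall t, (1 <= t)%N -> a t.+1 <= q * a t + b t) ->
  (1 - q) * \sum_(1 <= t < T.+1) a t <= \sum_(1 <= t < T) b t.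
Proof.
move=> q_ge0 a_ge0 a1 a_rec; case: T => [|T]; first by rewrite !big_geq ?mulr0.
set S := \sum_(1 <= t < T.+2) a t.
have S_le : S <= q * S + \sum_(1 <= t < T.+1) b t.
  rewrite {1}/S big_nat_recl // a1 add0r.
  apply: (@le_trans _ _ (\sum_(1 <= t < T.+1) (q * a t + b t))).
    by apply: ler_sum_nat => t /andP[t_ge1 _]; apply: a_rec.
  rewrite big_split /= -mulr_sumr lerD2r ler_wpM2l //.
  by rewrite /S [in X in _ <= X]big_nat_recr //= lerDl.
by rewrite mulrBl mul1r lerBlDr addrC.
Qed.

Section SpectralGap.
Context {R : realType} {n : nat} {E : rel 'I_n} {W : 'M[R]_n}.
Hypotheses (hA7 : assumption_A7 E W) (n_gt0 : (0 < n)%N).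

Let W_ge0 : forall i j, 0 <= W i j.
Proof. by case: hA7 => _ [_ []]. Qed.

Let W_row : forall i, \sum_j W i j = 1.
Proof. by case: hA7 => _ [_ [_ []]]. Qed.

Let W_col : forall j, \sum_i W i j = 1.
Proof. by case: hA7 => _ [_ [_ [_ []]]]. Qed.

Let W_edge_gt0 {a b} : E a b -> 0 < W a a * W a b.
Proof.
case: hA7 => _ [_ [_ [_ [_ [W_diag W_off]]]]] ab.
by case: (eqVneq a b) => [<-|/W_off[/(_ ab) Wab _]]; rewrite mulr_gt0 ?W_diag.
Qed.

Let C := \sum_(p : 'I_n * 'I_n | E p.1 p.2) (W p.1 p.1 * W p.1 p.2)^-1.

Let C_ge0 : 0 <= C.
Proof. by apply: sumr_ge0 => p /W_edge_gt0/ltW; rewrite invr_ge0. Qed.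

Let edge_sqr_le (u : 'I_n -> R) a b : E a b ->
  (u a - u b) ^+ 2 <= C * diag_energy W u.
Proof.
move=> ab; have Wab_gt0 := W_edge_gt0 ab.
rewrite -[_ ^+ 2](mulKf (lt0r_neq0 Wab_gt0)).
apply: ler_pM; rewrite ?invr_ge0 ?(ltW Wab_gt0) ?diag_energy_term_ge0 ?diag_energy_ge_term //.
rewrite /C (bigD1 (a, b)) //= lerDl sumr_ge0 // => p /andP[/W_edge_gt0/ltW].
by rewrite invr_ge0.
Qed.

Lemma poincare_diag_energy : exists2 K, 1 <= K & forall u : 'I_n -> R,
  \sum_i u i = 0 -> \sum_i u i ^+ 2 <= K * diag_energy W u.
Proof.
exists (n%:R ^+ 3 * C + 1); first by rewrite lerDr mulr_ge0.
move=> u sum_u0; set Q := diag_energy W u; set s := Num.sqrt (C * Q).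
have Q_ge0 : 0 <= Q by apply: diag_energy_ge0.
have edge_le a b : E a b -> `|u a - u b| <= s.
  by move=> ab; rewrite -sqrtr_sqr ler_wsqrtr // edge_sqr_le.
have pair_le i j : `|u i - u j| <= n%:R * s.
  case: hA7 => _ [/(_ i j)/connect_short_path[p Ep [-> size_p]] _].
  rewrite card_ord in size_p; apply: le_trans (path_dist_le edge_le _ _ Ep) _.
  by rewrite ler_wpM2r ?sqrtr_ge0 // ler_nat ltnW.
have coord_le i : u i ^+ 2 <= n%:R ^+ 2 * (C * Q).
  have n_pos : 0 < n%:R :> R by rewrite ltr0n.
  have : n%:R * `|u i| <= n%:R * (n%:R * s).
    have -> : n%:R * `|u i| = `|\sum_j (u i - u j)|.
      by rewrite sumrB sum_u0 subr0 sumr_const card_ord normrMn mulr_natl.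
    apply: le_trans (ler_norm_sum _ _ _) _.
    apply: le_trans (ler_sum _ (fun j _ => pair_le i j)) _.
    by rewrite sumr_const card_ord -[(n%:R * s) *+ n]mulr_natl.
  rewrite ler_pM2l // => ui_le.
  rewrite -[u i ^+ 2]real_normK ?num_real // -[C * Q]sqr_sqrtr ?mulr_ge0 // -exprMn.
  by rewrite lerXn2r ?nnegrE ?mulr_ge0 ?sqrtr_ge0.
apply: le_trans (ler_sum _ (fun i _ => coord_le i)) _.
have -> : \sum_(i < n) n%:R ^+ 2 * (C * Q) = n%:R ^+ 3 * C * Q.
  by rewrite sumr_const card_ord -[_ *+ n]mulr_natl; ring.
by rewrite mulrDl mul1r lerDl.
Qed.

Lemma centered_mix_contraction : exists2 rho, 0 <= rho < 1 & forall v : 'I_n -> R,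
  \sum_i (\sum_j (W i j - n%:R^-1) * v j) ^+ 2 <= rho * \sum_i v i ^+ 2.
Proof.
have [K K_ge1 poincareK] := poincare_diag_energy.
have K_gt0 : 0 < K := lt_le_trans ltr01 K_ge1.
exists (1 - (2 * K)^-1).
  rewrite subr_ge0 ltrBlDr ltrDl invr_gt0 mulr_gt0 // andbT invf_le1 ?mulr_gt0 //.
  lra.
move=> v; set u := fun j => v j - mean v.
rewrite (eq_bigr (fun i => (\sum_j W i j * u j) ^+ 2)); last first.
  by move=> i _; rewrite wsum_centerE.
have u_le := poincareK u (sum_center n_gt0 v).
apply: le_trans (_ : \sum_i u i ^+ 2 - 2^-1 * diag_energy W u <= _).
  by rewrite lerBrDr; apply: sum_sqr_mix_le.
apply: le_trans (_ : (1 - (2 * K)^-1) * \sum_i u i ^+ 2 <= _); last first.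
  by rewrite ler_wpM2l ?dev_le_sum_sqr // subr_ge0 invf_le1 ?mulr_gt0 //; lra.
rewrite mulrBl mul1r lerD2l lerN2 invfM -mulrA ler_wpM2l ?invr_ge0 //.
by rewrite ler_pdivrMl // mulrC.
Qed.

Let J := W - \matrix_(i, j) n%:R^-1.

Let cnorm_J_sqr (x : 'cV[R]_n) :
  cnorm (J *m x) ^+ 2 = \sum_i (\sum_j (W i j - n%:R^-1) * x j 0) ^+ 2.
Proof.
by rewrite cnorm_sqr; apply: eq_bigr => i _; rewrite mxE; under eq_bigr do rewrite !mxE.
Qed.

Let J_bounded : exists2 c, 0 <= c < 1 & forall x, cnorm (J *m x) <= c * cnorm x.
Proof.
have [rho /andP[rho_ge0 rho_lt1] contr] := centered_mix_contraction.
exists (Num.sqrt rho); first by rewrite sqrtr_ge0 -sqrtr1 ltr_sqrt.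
move=> x; rewrite -(ler_pXn2r (_ : 0 < 2)%N) ?nnegrE ?mulr_ge0 ?sqrtr_ge0 ?cnorm_ge0 //.
by rewrite exprMn (sqr_sqrtr rho_ge0) cnorm_J_sqr cnorm_sqr contr.
Qed.

Lemma lambdaW_ge0_lt1 : 0 <= lambdaW W < 1.
Proof.
have [c /andP[c_ge0 c_lt1] J_le] := J_bounded.
by have /andP[-> /le_lt_trans->] := spec_norm_le c_ge0 J_le.
Qed.

Lemma sqr_lambdaW_ge0_lt1 : 0 <= lambdaW W ^+ 2 < 1.
Proof. by have /andP[? ?] := lambdaW_ge0_lt1; rewrite sqr_ge0 expr_lt1. Qed.

Lemma sum_sqr_centered_mix_le (v : 'I_n -> R) :
  \sum_i (\sum_j (W i j - n%:R^-1) * v j) ^+ 2 <= lambdaW W ^+ 2 * \sum_i v i ^+ 2.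
Proof.
have [c /andP[c_ge0 _] J_le] := J_bounded.
have /andP[lam_ge0 _] := lambdaW_ge0_lt1.
have := cnorm_mulmx_le c_ge0 J_le (\col_j v j).
rewrite -(ler_pXn2r (_ : 0 < 2)%N) ?nnegrE ?mulr_ge0 ?cnorm_ge0 //.
rewrite exprMn cnorm_J_sqr cnorm_sqr.
by under eq_bigr do under eq_bigr do rewrite mxE; under [X in _ * X]eq_bigr do rewrite mxE.
Qed.

Lemma mean_mix v : mean (fun i => \sum_j W i j * v j) = mean v.
Proof.
rewrite /mean exchange_big /=; congr (_ * _).
by apply: eq_bigr => j _; rewrite -mulr_suml W_col mul1r.
Qed.

Lemma dev_mix_le v : dev (fun i => \sum_j W i j * v j) <= lambdaW W ^+ 2 * dev v.
Proof.
have centered i : \sum_j W i j * v j - mean v = \sum_j (W i j - n%:R^-1) * (v j - mean v).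
  rewrite wsum_centerE //.
  have -> : mean (fun j => v j - mean v) = 0 by rewrite /mean sum_center // mulr0.
  by under [RHS]eq_bigr do rewrite subr0; rewrite wsum_subr.
rewrite /dev mean_mix (eq_bigr _ (fun i _ => congr1 (fun r => r ^+ 2) (centered i))).
exact: sum_sqr_centered_mix_le.
Qed.

Variable d : nat.
Implicit Types v e : 'I_n -> 'rV[R]_d.

Lemma cons_err_step_le (alpha : R) v e :
  cons_err (fun i => \sum_j W i j *: (v j + alpha *: e j)) ^+ 2 <=
  (1 + lambdaW W ^+ 2) / 2 * cons_err v ^+ 2 +
  lambdaW W ^+ 2 * (1 + lambdaW W ^+ 2) / (1 - lambdaW W ^+ 2) * alpha ^+ 2 * snorm e ^+ 2.
Proof.
rewrite !cons_err_sqrE snorm_sqrE !mulr_sumr -big_split ler_sum // => k _ /=.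
have -> : (fun i => (\sum_j W i j *: (v j + alpha *: e j)) 0 k) =
    fun i => \sum_j W i j * (v j 0 k + alpha * e j 0 k).
  by apply/funext => i; rewrite summxE; apply: eq_bigr => j _; rewrite !mxE.
apply: le_trans (dev_mix_le _) _.
apply: le_trans (dev_add_le n_gt0 _ (fun j => v j 0 k) (fun j => alpha * e j 0 k)
  sqr_lambdaW_ge0_lt1) _.
have sum_scale : \sum_i (alpha * e i 0 k) ^+ 2 = alpha ^+ 2 * \sum_i e i 0 k ^+ 2.
  by rewrite mulr_sumr; apply: eq_bigr => i _; rewrite exprMn.
by rewrite lerD2l sum_scale mulrA.
Qed.

Lemma sum_cons_err_sqr_le (alpha : R) (x xhat : nat -> 'I_n -> 'rV[R]_d)
    (x1 : 'rV[R]_d) (T : nat) :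
  (forall i, x 1%N i = x1) ->
  (forall t i, (1 <= t)%N ->
     x t.+1 i = \sum_j W i j *: (x t j + alpha *: (xhat t j - x t j))) ->
  \sum_(1 <= t < T.+1) cons_err (x t) ^+ 2 <=
  4 * alpha ^+ 2 * lambdaW W ^+ 2 / (1 - lambdaW W ^+ 2) ^+ 2 *
  \sum_(1 <= t < T) snorm (fun i => xhat t i - x t i) ^+ 2.
Proof.
move=> x_init x_step; have /andP[L_ge0 L_lt1] := sqr_lambdaW_ge0_lt1.
set L := lambdaW W ^+ 2; set D := \sum_(1 <= t < T) _.
have D_ge0 : 0 <= D by apply: sumr_ge0 => t _; apply: sqr_ge0.
have one_subL_gt0 : 0 < 1 - L by rewrite subr_gt0.
have := @sum_le_of_contraction _ ((1 + L) / 2) (fun t => cons_err (x t) ^+ 2)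
  (fun t => L * (1 + L) / (1 - L) * alpha ^+ 2 * snorm (fun i => xhat t i - x t i) ^+ 2) T.
rewrite -mulr_sumr -/D (_ : 1 - (1 + L) / 2 = (1 - L) / 2); last by field.
move=> /(_ _ (fun t => sqr_ge0 _)) contr.
rewrite -(ler_pM2l (_ : 0 < (1 - L) / 2)) ?divr_gt0 //.
apply: le_trans (contr _ _ _) _.
- by rewrite divr_ge0 // addr_ge0.
- by rewrite (funext x_init) cons_err_const.
- by move=> t t_ge1; rewrite (funext (x_step t ^~ t_ge1)); apply: cons_err_step_le.
have -> : L * (1 + L) / (1 - L) * alpha ^+ 2 * D = (1 + L) * (L * alpha ^+ 2 / (1 - L) * D).
  by field; rewrite lt0r_neq0.
have -> : (1 - L) / 2 * (4 * alpha ^+ 2 * L / (1 - L) ^+ 2 * D) =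
    2 * (L * alpha ^+ 2 / (1 - L) * D).
  by field; rewrite lt0r_neq0.
have D'_ge0 : 0 <= L * alpha ^+ 2 / (1 - L) * D.
  by rewrite mulr_ge0 // divr_ge0 ?(ltW one_subL_gt0) // mulr_ge0 ?sqr_ge0.
rewrite ler_wpM2r //; lra.
Qed.

End SpectralGap.

Section Expectations.
Context {d : measure_display} {Omega : measurableType d} {R : realType}.

Lemma ge0_sum_integral_le (mu : measure Omega R) (a b : nat -> Omega -> R)
    (I J : seq nat) (K : R) : 0 <= K ->
  (forall t, measurable_fun setT (a t)) -> (forall t, measurable_fun setT (b t)) ->
  (forall t w, 0 <= a t w) -> (forall t w, 0 <= b t w) ->
  (forall w, \sum_(t <- I) a t w <= K * \sum_(t <- J) b t w) ->
  (\sum_(t <- I) \int[mu]_w (a t w)%:E <= K%:E * \sum_(t <- J) \int[mu]_w (b t w)%:E)%E.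
Proof.
move=> K_ge0 ma mb a_ge0 b_ge0 ab_le.
have mEa t : measurable_fun setT (EFin \o a t) by apply/measurable_EFinP.
have mEb t : measurable_fun setT (EFin \o b t) by apply/measurable_EFinP.
rewrite -(ge0_integral_sum _ measurableT mEa); last by move=> t w _; rewrite lee_fin.
rewrite -(ge0_integral_sum _ measurableT mEb); last by move=> t w _; rewrite lee_fin.
have mB := emeasurable_sum J mEb.
rewrite -ge0_integralZl_EFin //; last by move=> w _; rewrite sumEFin lee_fin sumr_ge0.
apply: ge0_le_integral => //.
- by move=> w _; rewrite sumEFin lee_fin sumr_ge0.
- exact: emeasurable_sum.
- exact: measurable_funeM.
- by move=> w _; rewrite !sumEFin -EFinM lee_fin.
Qed.

Context {n m : nat}.
Variable v : Omega -> 'I_n -> 'rV[R]_m.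
Hypothesis mv : forall i k, measurable_fun setT (fun w => v w i 0 k).

Lemma measurable_snorm_sqr : measurable_fun setT (fun w => snorm (v w) ^+ 2).
Proof.
rewrite (funext (fun w => snorm_sqrE (v w))).
apply: measurable_sum => k; apply: measurable_sum => i.
exact: measurable_funX.
Qed.

Lemma measurable_cons_err_sqr : measurable_fun setT (fun w => cons_err (v w) ^+ 2).
Proof.
rewrite (funext (fun w => cons_err_sqrE (v w))).
apply: measurable_sum => k; apply: measurable_sum => i.
apply/measurable_funX/measurable_funB => //.
exact/measurable_funM/measurable_sum.
Qed.

End Expectations.

Theorem lemma6 (R : realType) (n d : nat) (hn : (1 <= n)%N) (hd : (1 <= d)%N)
  (d0 : measure_display) (Omega : measurableType d0) (P : probability Omega R)
  (Xi : Type)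
  (f : 'I_n -> 'rV[R]_d -> Xi -> R) (gradf : 'I_n -> 'rV[R]_d -> Xi -> 'rV[R]_d)
  (hf : forall i s x, has_gradient (fun v => f i v s) x (gradf i x s))
  (mu : R) (hmu : 0 < mu)
  (fhat : 'I_n -> 'rV[R]_d -> 'rV[R]_d -> Xi -> R)
  (hfhat_sc : forall i x' s, strongly_convex mu (fun v => fhat i v x' s))
  (hfhat_grad : forall i x' s, has_gradient (fun v => fhat i v x' s) x' (gradf i x' s))
  (h g : 'rV[R]_d -> R) (hh : convex_fun h) (hg : convex_fun g)
  (E : rel 'I_n) (W : 'M[R]_n) (hA7 : assumption_A7 E W)
  (alpha beta : R) (halpha : 0 < alpha < 1) (hbeta : 0 < beta < 1)
  (b0 : nat) (hb0 : (1 <= b0)%N)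
  (xi batch : 'I_n -> nat -> Omega -> Xi)
  (hxi1 : forall i w, xi i 1%N w = batch i 0%N w)
  (x1 : 'rV[R]_d) (hx1 : g x1 <= 0)
  (x xhat y z : nat -> Omega -> 'I_n -> 'rV[R]_d)
  (hit : DMSSCA_iterates W alpha beta b0 gradf fhat h g xi batch x1 x xhat y z)
  (hmeas_x : forall t i k, measurable_fun setT (fun w => x t w i 0 k))
  (hmeas_xhat : forall t i k, measurable_fun setT (fun w => xhat t w i 0 k))
  (T : nat) (hT : (1 < T)%N) :
  (\sum_(1 <= t < T.+1) \int[P]_w ((cons_err (x t w) ^+ 2)%:E)
   <= ((4 * alpha ^+ 2 * lambdaW W ^+ 2) / (1 - lambdaW W ^+ 2) ^+ 2)%:E
      * \sum_(1 <= t < T) \int[P]_w ((snorm (fun i => xhat t w i - x t w i) ^+ 2)%:E))%E.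
Proof.
case: hit => x_init [_ [_ [_ [x_step _]]]].
have K_ge0 : 0 <= 4 * alpha ^+ 2 * lambdaW W ^+ 2 / (1 - lambdaW W ^+ 2) ^+ 2.
  by rewrite divr_ge0 ?sqr_ge0 // mulr_ge0 ?sqr_ge0 // mulr_ge0 ?sqr_ge0.
apply: ge0_sum_integral_le K_ge0 _ _ _ _ _ => [t|t|t w|t w|w]; rewrite ?sqr_ge0 //.
- exact: measurable_cons_err_sqr.
- apply: measurable_snorm_sqr => i k.
  rewrite (funext (fun w => mxE _ _ _ _ : (xhat t w i - x t w i) 0 k = _)).
  by under eq_fun do rewrite mxE; apply: measurable_funB.
- exact: (sum_cons_err_sqr_le hA7 hn _ _ _ _ _ _ (x_init w) (fun t i => x_step t w i)).
Qed.
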